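(* Let $N$ be a positive integer and $t>-\log N$. For integers $n\ge N$ let $$\delta_n(t,N)=\int_N^{n+1}\frac{dx}{t+\log x}-\sum_{k=N}^{n}\frac{1}{t+\log(k+\frac12)},$$ and set $\delta_{N-1}(t,N)=0$. (1) The sequence $(\delta_n(t,N))_{n\ge N}$ is positive, strictly increasing and bounded above; hence $\delta(t,N)=\lim_{n\to\infty}\delta_n(t,N)>0$ exists. (2) For all $n\ge N$, $\delta(t,N)-\delta_{n-1}(t,N)=\delta(t,n)$ and $$\frac{1}{24(n+1)(t+\log(n+1))^2}\le\delta(t,n)\le\frac{1}{24(n+\frac12)(t+\log(n+\frac12))^2}+\frac{1}{24n^2(t+\log n)^2}+\frac{1}{12n^2(t+\log n)^3}.$$ (3) $\delta(t,N)=\delta_{n-1}(t,N)+\frac{1+o(1)}{24n(\log n)^2}$ as $n\to\infty$, and $\delta(t,N)=O\!\left(\frac1{Nt^2}\right)$ as $t\to\infty$, with implied constant independent of $N$. *)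

From Stdlib Require Import Reals Lra Lia ClassicalEpsilon.
Open Scope R_scope.

(* Riemann integral of f over [a,b] as a plain real number: the value of
   RiemannInt for some integrability proof (unique by proof irrelevance of
   the value, RiemannInt_P5); arbitrary if f is not integrable. *)
Definition Rint (f : R -> R) (a b : R) : R :=
  epsilon (inhabits 0)
    (fun I => exists pr : Riemann_integrable f a b, RiemannInt pr = I).

(* ssum f N n = sum_{k=N}^{n} f k  (empty sum = 0 when n < N). *)
Fixpoint ssum (f : nat -> R) (N n : nat) : R :=
  match n with
  | O => if Nat.leb N 0 then f 0%nat else 0
  | S m => ssum f N m + (if Nat.leb N (S m) then f (S m) else 0)
  end.

(* delta_n(t,N) = int_N^{n+1} dx/(t+log x) - sum_{k=N}^{n} 1/(t+log(k+1/2)).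
   For n = N-1 this is 0 (empty integral and empty sum). *)
Definition delta_n (t : R) (N n : nat) : R :=
  Rint (fun x => / (t + ln x)) (INR N) (INR n + 1)
  - ssum (fun k => / (t + ln (INR k + / 2))) N n.

(* delta(t,N) = lim_{n -> oo} delta_n(t,N) (chosen limit; its existence is
   part of the theorem). *)
Definition delta (t : R) (N : nat) : R :=
  epsilon (inhabits 0) (fun l => Un_cv (fun m => delta_n t N (N + m)) l).

(* Write f x = 1 / (t + ln x).  Then delta_n(t,N) is the sum over N <= k <= n of the
   midpoint-rule errors E_k = int_k^{k+1} f - f (k + 1/2), and since f'' is positive and
   decreasing, Taylor's formula gives f''(k+1)/24 <= E_k <= f''(k)/24.  As f'''' > 0 and
   f'' decreases, f''(k) <= f'(k+1/2) - f'(k-1/2) and f''(k+1) >= f'(k+2) - f'(k+1), so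
   these bounds telescope: the partial sums increase and are bounded, and the tail
   delta(t,n) lies between -f'(n+1)/24 and (f''(n) - f'(n+1/2))/24.  Both bounds are
   1/(24 n (ln n)^2) (1 + o(1)) as n -> oo and O(1/(n t^2)) as t -> oo. *)

From Stdlib Require Import Reals Lra Lia ClassicalEpsilon.
From Coquelicot Require Import Coquelicot.
Open Scope R_scope.

Lemma ssum_lt (a : nat -> R) N n : (n < N)%nat -> ssum a N n = 0.
Proof.
  induction n as [|n IH]; intros Hn; simpl.
  - destruct N; [lia | reflexivity].
  - rewrite IH by lia. replace (Nat.leb N (S n)) with false; [ring |].
    symmetry. apply Nat.leb_gt. lia.
Qed.

Lemma ssum_S (a : nat -> R) N n : (N <= S n)%nat -> ssum a N (S n) = ssum a N n + a (S n).
Proof. intros Hn. simpl. apply Nat.leb_le in Hn. rewrite Hn. reflexivity. Qed.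

Lemma ssum_N (a : nat -> R) N : ssum a N N = a N.
Proof. destruct N; [reflexivity |]. rewrite ssum_S, ssum_lt by lia. ring. Qed.

Lemma ssum_minus (a b : nat -> R) N n :
  ssum (fun k => a k - b k) N n = ssum a N n - ssum b N n.
Proof.
  induction n as [|n IH]; simpl; [destruct (Nat.leb N 0); ring |].
  rewrite IH. destruct (Nat.leb N (S n)); ring.
Qed.

Lemma ssum_le (a b : nat -> R) N n :
  (forall k, (N <= k <= n)%nat -> a k <= b k) -> ssum a N n <= ssum b N n.
Proof.
  induction n as [|n IH]; intros Hab.
  - simpl. destruct (Nat.leb N 0) eqn:HN; [apply Nat.leb_le in HN; apply Hab; lia | lra].
  - destruct (Nat.le_gt_cases N (S n)).
    + rewrite !ssum_S by lia.
      apply Rplus_le_compat; [apply IH | apply Hab]; intros; try apply Hab; lia.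
    + rewrite !ssum_lt by lia. lra.
Qed.

Lemma ssum_ext (a b : nat -> R) N n :
  (forall k, (N <= k <= n)%nat -> a k = b k) -> ssum a N n = ssum b N n.
Proof.
  intros Hab. apply Rle_antisym; apply ssum_le; intros k Hk; rewrite (Hab k Hk); lra.
Qed.

Lemma ssum_pos (a : nat -> R) N n :
  (N <= n)%nat -> (forall k, (N <= k <= n)%nat -> 0 < a k) -> 0 < ssum a N n.
Proof.
  induction n as [|n IH]; intros Hn Ha.
  - replace N with 0%nat by lia. apply Ha. lia.
  - rewrite ssum_S by lia. destruct (Nat.eq_dec N (S n)) as [-> | HN].
    + rewrite ssum_lt by lia. rewrite Rplus_0_l. apply Ha. lia.
    + apply Rplus_lt_0_compat; [apply IH | apply Ha]; intros; try apply Ha; lia.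
Qed.

Lemma ssum_telescope (b : nat -> R) N n :
  (N <= S n)%nat -> ssum (fun k => b (S k) - b k) N n = b (S n) - b N.
Proof.
  induction n as [|n IH]; intros Hn.
  - destruct N as [|[|N]]; simpl; [reflexivity | ring | lia].
  - destruct (Nat.eq_dec N (S (S n))) as [-> | HN].
    + rewrite ssum_lt by lia. ring.
    + rewrite ssum_S, IH by lia. ring.
Qed.

Lemma ssum_split (a : nat -> R) N p n :
  (N <= S p)%nat -> (p <= n)%nat -> ssum a N n = ssum a N p + ssum a (S p) n.
Proof.
  intros HN. induction n as [|n IH]; intros Hp.
  - replace p with 0%nat by lia. simpl. ring.
  - destruct (Nat.eq_dec p (S n)) as [-> | Hne].
    + rewrite (ssum_lt a (S (S n))) by lia. ring.
    + rewrite !ssum_S, IH by lia. ring.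
Qed.

Lemma continuity_pt_of_is_derive (g : R -> R) x l : is_derive g x l -> continuity_pt g x.
Proof.
  intros Hg. apply continuity_pt_filterlim. apply (ex_derive_continuous g x). exists l. exact Hg.
Qed.

(* Two mean value steps:
   [h x - h m - h' m (x - m) = (h' c - h' m) (x - m) = h'' d (c - m) (x - m)]
   with [c] between [m] and [x] and [d] between [m] and [c]. *)
Lemma concave_le_tangent (h h' h'' : R -> R) a b m x :
  a <= m <= b -> a <= x <= b ->
  (forall y, a <= y <= b -> is_derive h y (h' y)) ->
  (forall y, a <= y <= b -> is_derive h' y (h'' y)) ->
  (forall y, a <= y <= b -> h'' y <= 0) ->
  h x <= h m + h' m * (x - m).
Proof.
  intros Hm Hx Hh Hh' Hh''.
  assert (Hmx : forall y, Rmin m x <= y <= Rmax m x -> a <= y <= b).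
  { intros y Hy. unfold Rmin, Rmax in Hy. destruct (Rle_dec m x); lra. }
  destruct (MVT_gen h m x h') as [c [Hc Ec]].
  { intros y Hy. apply Hh, Hmx. lra. }
  { intros y Hy. eapply continuity_pt_of_is_derive, Hh, Hmx, Hy. }
  assert (Hmc : forall y, Rmin m c <= y <= Rmax m c -> a <= y <= b).
  { intros y Hy. apply Hmx. unfold Rmin, Rmax in *.
    destruct (Rle_dec m x), (Rle_dec m c); lra. }
  destruct (MVT_gen h' m c h'') as [d [Hd Ed]].
  { intros y Hy. apply Hh', Hmc. lra. }
  { intros y Hy. eapply continuity_pt_of_is_derive, Hh', Hmc, Hy. }
  assert (Hsign : 0 <= (c - m) * (x - m)).
  { unfold Rmin, Rmax in Hc. destruct (Rle_dec m x); nra. }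
  pose proof (Hh'' d (Hmc d Hd)).
  replace (h x) with (h m + h' m * (x - m) + h'' d * ((c - m) * (x - m))) by nra.
  nra.
Qed.

Section MidpointRule.

Variables (g g' g'' : R -> R) (a I : R).
Hypothesis g_derive : forall y, a <= y <= a + 1 -> is_derive g y (g' y).
Hypothesis g'_derive : forall y, a <= y <= a + 1 -> is_derive g' y (g'' y).
Hypothesis g_RInt : is_RInt g a (a + 1) I.

(* [g] lies below the parabola [P] of curvature [B] touching it at the midpoint,
   and [P] integrates to [g (a + 1/2) + B / 24]. *)
Lemma midpoint_rule_le B :
  (forall y, a <= y <= a + 1 -> g'' y <= B) -> I <= g (a + / 2) + B / 24.
Proof.
  intros HB. set (m := a + / 2).
  set (P := fun x => g m + g' m * (x - m) + B * (x - m) ^ 2 / 2).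
  set (Q := fun x => g m * x + g' m * (x - m) ^ 2 / 2 + B * (x - m) ^ 3 / 6).
  assert (HP : is_RInt P a (a + 1) (g m + B / 24)).
  { replace (g m + B / 24) with (minus (Q (a + 1)) (Q a))
      by (unfold minus, plus, opp, Q, m; simpl; field).
    apply (is_RInt_derive Q P); intros x _.
    - unfold Q, P. auto_derive; [easy | field].
    - apply (ex_derive_continuous P). unfold P. auto_derive. easy. }
  apply (is_RInt_le g P a (a + 1)); [lra | exact g_RInt | exact HP |].
  intros x Hx.
  pose proof (concave_le_tangent (fun y => g y - B * (y - m) ^ 2 / 2)
    (fun y => g' y - B * (y - m)) (fun y => g'' y - B) a (a + 1) m x) as Ht.
  unfold P.
  cut (g x - B * (x - m) ^ 2 / 2
       <= g m - B * (m - m) ^ 2 / 2 + (g' m - B * (m - m)) * (x - m)).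
  { intros H. ring_simplify in H. lra. }
  apply Ht; try (unfold m; lra).
  - intros y Hy. apply (is_derive_minus g). apply g_derive, Hy. auto_derive; [easy | field].
  - intros y Hy. apply (is_derive_minus g'). apply g'_derive, Hy. auto_derive; [easy | ring].
  - intros y Hy. pose proof (HB y Hy). lra.
Qed.

End MidpointRule.

Lemma midpoint_rule_ge (g g' g'' : R -> R) a I B :
  (forall y, a <= y <= a + 1 -> is_derive g y (g' y)) ->
  (forall y, a <= y <= a + 1 -> is_derive g' y (g'' y)) ->
  is_RInt g a (a + 1) I ->
  (forall y, a <= y <= a + 1 -> B <= g'' y) -> g (a + / 2) + B / 24 <= I.
Proof.
  intros Hg Hg' HI HB.
  pose proof (midpoint_rule_le (fun y => - g y) (fun y => - g' y) (fun y => - g'' y) a (- I)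
    (fun y Hy => is_derive_opp _ _ _ (Hg y Hy)) (fun y Hy => is_derive_opp _ _ _ (Hg' y Hy))
    (is_RInt_opp _ _ _ _ HI) (- B)) as H.
  cut (- I <= - g (a + / 2) + - B / 24); [lra |].
  apply H. intros y Hy. pose proof (HB y Hy). lra.
Qed.

Lemma is_lim_seq_INR_plus c : is_lim_seq (fun k => INR k + c) p_infty.
Proof.
  apply (is_lim_seq_plus _ _ p_infty c);
    [apply is_lim_seq_INR | apply is_lim_seq_const | reflexivity].
Qed.

Lemma is_lim_seq_plus_ln t c : is_lim_seq (fun k => t + ln (INR k + c)) p_infty.
Proof.
  apply (is_lim_seq_plus _ _ t p_infty); [apply is_lim_seq_const | | reflexivity].
  apply (is_lim_comp_seq ln _ p_infty p_infty).
  - apply is_lim_ln_p.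
  - exists 0%nat. intros. discriminate.
  - apply is_lim_seq_INR_plus.
Qed.

Lemma is_lim_seq_INR_div c : 0 < c -> is_lim_seq (fun k => INR k / (INR k + c)) 1.
Proof.
  intros Hc. apply (is_lim_seq_ext (fun k => 1 - c * / (INR k + c))).
  { intros k. pose proof (pos_INR k). field. lra. }
  replace (Finite 1) with (Finite (1 - c * 0)) by (f_equal; ring).
  apply is_lim_seq_minus'; [apply is_lim_seq_const |].
  apply is_lim_seq_mult'; [apply is_lim_seq_const |].
  apply (is_lim_seq_inv _ p_infty); [apply is_lim_seq_INR_plus | discriminate].
Qed.

(* The denominator differs from [ln k] by at most [|t| + ln 2], while it tends to infinity. *)
Lemma is_lim_seq_ln_div_sqr t c : 0 <= c <= 1 ->
  is_lim_seq (fun k => (ln (INR k) / (t + ln (INR k + c))) ^ 2) 1.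
Proof.
  intros Hc. set (L := fun k => t + ln (INR k + c)). set (K := Rabs t + ln 2).
  assert (Hgap : forall k, (1 <= k)%nat -> Rabs (L k - ln (INR k)) <= K).
  { intros k Hk. assert (1 <= INR k) by (apply (le_INR 1), Hk).
    assert (ln (INR k) <= ln (INR k + c)) by (apply ln_le; lra).
    assert (ln (INR k + c) <= ln 2 + ln (INR k)) by (rewrite <- ln_mult by lra; apply ln_le; lra).
    pose proof (Rabs_triang t (ln (INR k + c) - ln (INR k))).
    rewrite (Rabs_pos_eq (ln (INR k + c) - ln (INR k))) in * by lra.
    unfold L, K.
    replace (t + ln (INR k + c) - ln (INR k)) with (t + (ln (INR k + c) - ln (INR k))) by ring.
    lra. }
  assert (HinvL : is_lim_seq (fun k => / L k) 0)
    by (apply (is_lim_seq_inv _ p_infty); [apply is_lim_seq_plus_ln | discriminate]).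
  destruct (proj2 (is_lim_seq_spec _ _) (is_lim_seq_plus_ln t c) 0) as [M HM].
  assert (Hrel : is_lim_seq (fun k => (L k - ln (INR k)) / L k) 0).
  { apply (is_lim_seq_le_le_loc (fun k => - K * / L k) _ (fun k => K * / L k)).
    - exists (S M). intros k Hk. specialize (HM k ltac:(lia)). fold (L k) in HM.
      pose proof (proj1 (Rabs_le_between _ _) (Hgap k ltac:(lia))). unfold Rdiv.
      assert (0 < / L k) by (apply Rinv_0_lt_compat; exact HM).
      split; apply Rmult_le_compat_r; lra.
    - replace (Finite 0) with (Finite (- K * 0)) by (f_equal; ring).
      apply is_lim_seq_mult'; [apply is_lim_seq_const | exact HinvL].
    - replace (Finite 0) with (Finite (K * 0)) by (f_equal; ring).
      apply is_lim_seq_mult'; [apply is_lim_seq_const | exact HinvL]. }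
  apply (is_lim_seq_ext_loc
           (fun k => (1 - (L k - ln (INR k)) / L k) * (1 - (L k - ln (INR k)) / L k))).
  { exists M. intros k Hk. specialize (HM k Hk). fold (L k) in HM.
    cbv beta. fold (L k). field. lra. }
  replace (Finite 1) with (Finite ((1 - 0) * (1 - 0))) by (f_equal; ring).
  apply is_lim_seq_mult'; apply is_lim_seq_minus'; try apply is_lim_seq_const; exact Hrel.
Qed.

Definition f (t x : R) := / (t + ln x).
Definition f' (t x : R) := - / (x * (t + ln x) ^ 2).
Definition f'' (t x : R) := / (x ^ 2 * (t + ln x) ^ 2) + 2 / (x ^ 2 * (t + ln x) ^ 3).
Definition f''' (t x : R) :=
  - (2 / (x ^ 3 * (t + ln x) ^ 2) + 6 / (x ^ 3 * (t + ln x) ^ 3) + 6 / (x ^ 3 * (t + ln x) ^ 4)).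
Definition f'''' (t x : R) :=
  6 / (x ^ 4 * (t + ln x) ^ 2) + 22 / (x ^ 4 * (t + ln x) ^ 3)
  + 36 / (x ^ 4 * (t + ln x) ^ 4) + 24 / (x ^ 4 * (t + ln x) ^ 5).

Definition dom (t x : R) := 0 < x /\ 0 < t + ln x.

Ltac positivity :=
  repeat (apply Rmult_lt_0_compat || apply pow_lt || apply Rinv_0_lt_compat); lra.

Ltac derive_on_dom :=
  intros [? ?]; auto_derive;
  [repeat split; try lra; apply Rgt_not_eq, Rlt_gt; positivity
  | field; repeat split; apply Rgt_not_eq, Rlt_gt; positivity].

Section LogReciprocal.

Variable t : R.

Lemma dom_le x y : dom t x -> x <= y -> dom t y.
Proof.
  intros [Hx Hl] Hxy. assert (ln x <= ln y) by (apply ln_le; lra). split; lra.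
Qed.

Lemma dom_INR_le m n : dom t (INR m) -> (m <= n)%nat -> dom t (INR n).
Proof. intros Hm Hmn. apply (dom_le (INR m)); [exact Hm | apply le_INR, Hmn]. Qed.

Lemma dom_INR_le_plus m n c : dom t (INR m) -> (m <= n)%nat -> 0 <= c -> dom t (INR n + c).
Proof.
  intros Hm Hmn Hc. apply (dom_le (INR m)); [exact Hm |]. pose proof (le_INR _ _ Hmn). lra.
Qed.

Lemma dom_INR_ge_1 n : dom t (INR n) -> (1 <= n)%nat.
Proof. intros [Hn _]. destruct n; [simpl in Hn; lra | lia]. Qed.

Lemma is_derive_f x : dom t x -> is_derive (f t) x (f' t x).
Proof. unfold f, f'. derive_on_dom. Qed.
Lemma is_derive_f' x : dom t x -> is_derive (f' t) x (f'' t x).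
Proof. unfold f', f''. derive_on_dom. Qed.
Lemma is_derive_f'' x : dom t x -> is_derive (f'' t) x (f''' t x).
Proof. unfold f'', f'''. derive_on_dom. Qed.
Lemma is_derive_f''' x : dom t x -> is_derive (f''' t) x (f'''' t x).
Proof. unfold f''', f''''. derive_on_dom. Qed.

Lemma f'_lt_0 x : dom t x -> f' t x < 0.
Proof.
  intros [Hx Hl]. unfold f'. assert (0 < / (x * (t + ln x) ^ 2)) by positivity. lra.
Qed.

Lemma f''_gt_0 x : dom t x -> 0 < f'' t x.
Proof.
  intros [Hx Hl]. unfold f'', Rdiv.
  assert (0 < / (x ^ 2 * (t + ln x) ^ 2)) by positivity.
  assert (0 < 2 * / (x ^ 2 * (t + ln x) ^ 3)) by positivity. lra.
Qed.

Lemma f''''_gt_0 x : dom t x -> 0 < f'''' t x.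
Proof.
  intros [Hx Hl]. unfold f'''', Rdiv.
  assert (0 < 6 * / (x ^ 4 * (t + ln x) ^ 2)) by positivity.
  assert (0 < 22 * / (x ^ 4 * (t + ln x) ^ 3)) by positivity.
  assert (0 < 36 * / (x ^ 4 * (t + ln x) ^ 4)) by positivity.
  assert (0 < 24 * / (x ^ 4 * (t + ln x) ^ 5)) by positivity. lra.
Qed.

Lemma f''_le x y : dom t x -> x <= y -> f'' t y <= f'' t x.
Proof.
  intros Hx Hxy. destruct (dom_le x y Hx Hxy) as [Hy Hly]. destruct Hx as [Hx Hlx].
  assert (ln x <= ln y) by (apply ln_le; lra).
  assert (Hden : forall k, (0 < k)%nat ->
    / (y ^ 2 * (t + ln y) ^ k) <= / (x ^ 2 * (t + ln x) ^ k)).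
  { intros k Hk. apply Rinv_le_contravar; [positivity |].
    apply Rmult_le_compat; try (apply pow_le; lra); apply pow_incr; lra. }
  unfold f'', Rdiv. pose proof (Hden 2%nat ltac:(lia)). pose proof (Hden 3%nat ltac:(lia)). lra.
Qed.

Lemma ex_RInt_f a b : dom t a -> a <= b -> ex_RInt (f t) a b.
Proof.
  intros Ha Hab. apply (ex_RInt_continuous (V := R_CompleteNormedModule)). intros z Hz.
  apply (ex_derive_continuous (f t)). exists (f' t z). apply is_derive_f, (dom_le a); [exact Ha |].
  rewrite Rmin_left in Hz; lra.
Qed.

(* [f''] is convex, so it lies below its mean over [[x - 1/2, x + 1/2]]. *)
Lemma f''_le_f'_diff x : dom t (x - / 2) -> f'' t x <= f' t (x + / 2) - f' t (x - / 2).
Proof.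
  intros Hx. set (a := x - / 2).
  assert (Ha : forall y, a <= y <= a + 1 -> dom t y)
    by (intros y Hy; apply (dom_le a); [exact Hx | lra]).
  replace (x + / 2) with (a + 1) by (unfold a; field).
  replace x with (a + / 2) at 1 by (unfold a; field).
  replace (f'' t (a + / 2)) with (f'' t (a + / 2) + 0 / 24) by field.
  apply (midpoint_rule_ge (f'' t) (f''' t) (f'''' t) a).
  - intros y Hy. apply is_derive_f'', Ha, Hy.
  - intros y Hy. apply is_derive_f''', Ha, Hy.
  - apply (is_RInt_derive (f' t) (f'' t)); intros y Hy; rewrite Rmin_left, Rmax_right in Hy by lra.
    + apply is_derive_f', Ha, Hy.
    + apply (ex_derive_continuous (f'' t)). exists (f''' t y). apply is_derive_f'', Ha, Hy.
  - intros y Hy. apply Rlt_le, f''''_gt_0, Ha, Hy.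
Qed.

Lemma f'_diff_le_f'' x : dom t x -> f' t (x + 1) - f' t x <= f'' t x.
Proof.
  intros Hx. assert (Hd : forall y, Rmin x (x + 1) <= y <= Rmax x (x + 1) -> dom t y).
  { intros y Hy. rewrite Rmin_left in Hy by lra. apply (dom_le x); [exact Hx | lra]. }
  destruct (MVT_gen (f' t) x (x + 1) (f'' t)) as [c [Hc ->]].
  - intros y Hy. apply is_derive_f', Hd. lra.
  - intros y Hy. apply (continuity_pt_of_is_derive _ _ (f'' t y)), is_derive_f', Hd, Hy.
  - rewrite Rmin_left in Hc by lra. replace (x + 1 - x) with 1 by ring.
    rewrite Rmult_1_r. apply f''_le; [exact Hx | lra].
Qed.

Lemma is_lim_seq_f'_0 c : is_lim_seq (fun k => f' t (INR k + c)) 0.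
Proof.
  apply (is_lim_seq_ext
           (fun k => - / ((INR k + c) * ((t + ln (INR k + c)) * (t + ln (INR k + c)))))).
  { intros k. unfold f'. rewrite <- Rsqr_pow2. reflexivity. }
  replace (Finite 0) with (Rbar_opp (Rbar_inv p_infty)) by (simpl; f_equal; ring).
  apply -> is_lim_seq_opp. apply is_lim_seq_inv; [| discriminate].
  apply (is_lim_seq_mult _ _ p_infty p_infty); [apply is_lim_seq_INR_plus | | reflexivity].
  apply (is_lim_seq_mult _ _ p_infty p_infty);
    [apply is_lim_seq_plus_ln | apply is_lim_seq_plus_ln | reflexivity].
Qed.

Lemma eventually_dom : eventually (fun n => (1 <= n)%nat /\ dom t (INR n)).
Proof.
  destruct (proj2 (is_lim_seq_spec _ _) (is_lim_seq_plus_ln t 0) 0) as [M HM].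
  exists (S M). intros n Hn. specialize (HM n ltac:(lia)). rewrite Rplus_0_r in HM.
  split; [lia | split; [apply lt_0_INR; lia | exact HM]].
Qed.

End LogReciprocal.

Lemma Rint_RInt g a b : ex_RInt g a b -> Rint g a b = RInt g a b.
Proof.
  intros H. unfold Rint. pose proof (ex_RInt_Reals_0 g a b H) as pr.
  destruct (epsilon_spec (inhabits 0)
              (fun I => exists pr : Riemann_integrable g a b, RiemannInt pr = I))
    as [pr' <-]; [exists (RiemannInt pr), pr; reflexivity |].
  symmetry. apply RInt_Reals.
Qed.

Definition midpoint_error (t : R) (k : nat) : R :=
  RInt (f t) (INR k) (INR k + 1) - f t (INR k + / 2).

Section Delta.

Variable t : R.

Lemma midpoint_error_bounds k : dom t (INR k) ->
  f'' t (INR k + 1) / 24 <= midpoint_error t k <= f'' t (INR k) / 24.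
Proof.
  intros Hk. set (x := INR k).
  assert (Hx : forall y, x <= y <= x + 1 -> dom t y)
    by (intros y Hy; apply (dom_le t x); [exact Hk | lra]).
  assert (Hf : forall y, x <= y <= x + 1 -> is_derive (f t) y (f' t y))
    by (intros; apply is_derive_f, Hx; auto).
  assert (Hf' : forall y, x <= y <= x + 1 -> is_derive (f' t) y (f'' t y))
    by (intros; apply is_derive_f', Hx; auto).
  assert (HI := RInt_correct _ _ _ (ex_RInt_f t x (x + 1) Hk ltac:(lra))).
  unfold midpoint_error. fold x. split.
  - pose proof (midpoint_rule_ge _ _ _ _ _ (f'' t (x + 1)) Hf Hf' HI) as H.
    cut (f t (x + / 2) + f'' t (x + 1) / 24 <= RInt (f t) x (x + 1)); [lra |].
    apply H. intros y Hy. apply f''_le; [apply Hx, Hy | lra].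
  - pose proof (midpoint_rule_le _ _ _ _ _ Hf Hf' HI (f'' t x)) as H.
    cut (RInt (f t) x (x + 1) <= f t (x + / 2) + f'' t x / 24); [lra |].
    apply H. intros y Hy. apply f''_le; [exact Hk | lra].
Qed.

Lemma midpoint_error_gt_0 k : dom t (INR k) -> 0 < midpoint_error t k.
Proof.
  intros Hk. pose proof (midpoint_error_bounds k Hk).
  pose proof (f''_gt_0 t (INR k + 1) (dom_INR_le_plus t k k 1 Hk (le_n k) ltac:(lra))). lra.
Qed.

Lemma delta_n_eq_ssum N n : dom t (INR N) -> (N <= S n)%nat ->
  delta_n t N n = ssum (midpoint_error t) N n.
Proof.
  intros HN Hn. set (b := fun k => RInt (f t) (INR N) (INR k)).
  assert (Hb : forall k, (N <= k)%nat -> b (S k) - b k = RInt (f t) (INR k) (INR k + 1)).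
  { intros k Hk. assert (INR N <= INR k) by (apply le_INR, Hk).
    unfold b. rewrite S_INR, <- (RInt_Chasles (V := R_CompleteNormedModule) _ (INR N) (INR k)).
    - unfold plus. simpl. ring.
    - apply ex_RInt_f; assumption.
    - apply ex_RInt_f; [apply (dom_INR_le t N) |]; auto; lra. }
  unfold delta_n, midpoint_error.
  rewrite Rint_RInt by (apply ex_RInt_f; [exact HN | rewrite <- S_INR; apply le_INR, Hn]).
  rewrite ssum_minus. f_equal.
  rewrite <- (ssum_ext (fun k => b (S k) - b k)) by (intros k Hk; apply Hb; lia).
  rewrite ssum_telescope by exact Hn.
  assert (H0 : b N = 0) by exact (RInt_point (V := R_CompleteNormedModule) _ _).
  rewrite H0, Rminus_0_r. unfold b. rewrite S_INR. reflexivity.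
Qed.

(* [f''_le_f'_diff] needs [k - 1/2] in the domain, which is only guaranteed from [k = n + 1]
   on; the first error is bounded by [f''(n)/24] alone. *)
Lemma ssum_midpoint_error_le n p : dom t (INR n) -> (n <= p)%nat ->
  ssum (midpoint_error t) n p <= (f'' t (INR n) - f' t (INR n + / 2)) / 24.
Proof.
  intros Hn Hp. set (b := fun k : nat => f' t (INR k - / 2) / 24).
  rewrite (ssum_split _ n n p), ssum_N by lia.
  assert (Htail : ssum (midpoint_error t) (S n) p <= b (S p) - b (S n)).
  { rewrite <- ssum_telescope by lia. apply ssum_le. intros k Hk.
    assert (Hk' : dom t (INR k - / 2)).
    { apply (dom_le t (INR n)); [exact Hn |]. assert (INR (S n) <= INR k) by (apply le_INR; lia).
      rewrite S_INR in *. lra. }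
    pose proof (f''_le_f'_diff t (INR k) Hk').
    pose proof (midpoint_error_bounds k (dom_INR_le t n k Hn ltac:(lia))).
    unfold b. rewrite S_INR. replace (INR k + 1 - / 2) with (INR k + / 2) by field. lra. }
  pose proof (midpoint_error_bounds n Hn).
  pose proof (f'_lt_0 t (INR p + / 2) (dom_INR_le_plus t n p (/ 2) Hn Hp ltac:(lra))).
  unfold b in Htail. rewrite !S_INR in Htail.
  replace (INR p + 1 - / 2) with (INR p + / 2) in Htail by field.
  replace (INR n + 1 - / 2) with (INR n + / 2) in Htail by field. lra.
Qed.

Lemma ssum_midpoint_error_ge n p : dom t (INR n) -> (n <= S p)%nat ->
  (f' t (INR p + 2) - f' t (INR n + 1)) / 24 <= ssum (midpoint_error t) n p.
Proof.
  intros Hn Hp. set (b := fun k : nat => f' t (INR k + 1) / 24).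
  replace ((f' t (INR p + 2) - f' t (INR n + 1)) / 24) with (b (S p) - b n)
    by (unfold b; rewrite S_INR; replace (INR p + 1 + 1) with (INR p + 2) by ring; field).
  rewrite <- ssum_telescope by exact Hp. apply ssum_le. intros k Hk.
  pose proof (f'_diff_le_f'' t (INR k + 1) (dom_INR_le_plus t n k 1 Hn ltac:(lia) ltac:(lra))).
  pose proof (midpoint_error_bounds k (dom_INR_le t n k Hn ltac:(lia))).
  unfold b. rewrite S_INR. lra.
Qed.

Lemma delta_n_gt_0 N n : dom t (INR N) -> (N <= n)%nat -> 0 < delta_n t N n.
Proof.
  intros HN Hn. rewrite delta_n_eq_ssum by (assumption || lia).
  apply ssum_pos; [exact Hn |]. intros k Hk.
  apply midpoint_error_gt_0, (dom_INR_le t N); [exact HN | lia].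
Qed.

Lemma delta_n_lt_S N n : dom t (INR N) -> (N <= n)%nat -> delta_n t N n < delta_n t N (S n).
Proof.
  intros HN Hn. rewrite !delta_n_eq_ssum, ssum_S by (assumption || lia).
  pose proof (midpoint_error_gt_0 (S n) (dom_INR_le t N (S n) HN ltac:(lia))). lra.
Qed.

Lemma delta_n_le N n : dom t (INR N) -> (N <= n)%nat ->
  delta_n t N n <= (f'' t (INR N) - f' t (INR N + / 2)) / 24.
Proof.
  intros HN Hn. rewrite delta_n_eq_ssum by (assumption || lia).
  apply ssum_midpoint_error_le; assumption.
Qed.

Lemma delta_is_lim n : dom t (INR n) ->
  is_lim_seq (fun m => delta_n t n (n + m)) (delta t n).
Proof.
  intros Hn.
  destruct (ex_finite_lim_seq_incr (fun m => delta_n t n (n + m))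
              ((f'' t (INR n) - f' t (INR n + / 2)) / 24)) as [l Hl].
  - intros m. rewrite <- plus_n_Sm. apply Rlt_le, delta_n_lt_S; [exact Hn | lia].
  - intros m. apply delta_n_le; [exact Hn | lia].
  - apply is_lim_seq_Reals. unfold delta. apply epsilon_spec.
    exists l. apply is_lim_seq_Reals, Hl.
Qed.

Lemma delta_sub_delta_n N n : dom t (INR N) -> (N <= n)%nat ->
  delta t N - delta_n t N (n - 1) = delta t n.
Proof.
  intros HN Hn. assert (Hn' : dom t (INR n)) by exact (dom_INR_le t N n HN Hn).
  pose proof (dom_INR_ge_1 t N HN) as HN1.
  assert (Hlim : is_lim_seq (fun m => delta_n t n (n + m)) (delta t N - delta_n t N (n - 1))).
  { apply (is_lim_seq_ext (fun m => delta_n t N (N + (m + (n - N))) - delta_n t N (n - 1))).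
    - intros m. replace (N + (m + (n - N)))%nat with (n + m)%nat by lia.
      rewrite (delta_n_eq_ssum N (n + m)), (delta_n_eq_ssum N (n - 1)),
        (delta_n_eq_ssum n (n + m)) by (assumption || lia).
      rewrite (ssum_split _ N (n - 1) (n + m)) by lia. replace (S (n - 1)) with n by lia. ring.
    - apply is_lim_seq_minus'; [| apply is_lim_seq_const].
      exact (proj1 (is_lim_seq_incr_n _ (n - N) _) (delta_is_lim N HN)). }
  apply is_lim_seq_unique in Hlim. rewrite (is_lim_seq_unique _ _ (delta_is_lim n Hn')) in Hlim.
  injection Hlim as ->. reflexivity.
Qed.

Lemma delta_ge n : dom t (INR n) ->
  / (24 * (INR n + 1) * (t + ln (INR n + 1)) ^ 2) <= delta t n.
Proof.
  intros Hn. destruct (dom_le t (INR n) (INR n + 1) Hn ltac:(lra)) as [Hx Hl].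
  replace (/ (24 * (INR n + 1) * (t + ln (INR n + 1)) ^ 2)) with ((0 - f' t (INR n + 1)) * / 24)
    by (unfold f'; field; split; lra).
  apply (is_lim_seq_le (fun m => (f' t (INR (n + m) + 2) - f' t (INR n + 1)) * / 24)
           (fun m => delta_n t n (n + m)) (Finite _) (Finite _)); [| | exact (delta_is_lim n Hn)].
  - intros m. rewrite delta_n_eq_ssum by (assumption || lia).
    apply ssum_midpoint_error_ge; [exact Hn | lia].
  - apply is_lim_seq_mult'; [| apply is_lim_seq_const].
    apply is_lim_seq_minus'; [| apply is_lim_seq_const].
    apply (is_lim_seq_ext (fun m => f' t (INR (m + n) + 2)));
      [intros m; rewrite Nat.add_comm; reflexivity |].
    exact (proj1 (is_lim_seq_incr_n _ n _) (is_lim_seq_f'_0 t 2)).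
Qed.

Lemma delta_le n : dom t (INR n) ->
  delta t n <=
    / (24 * (INR n + / 2) * (t + ln (INR n + / 2)) ^ 2)
    + / (24 * INR n ^ 2 * (t + ln (INR n)) ^ 2)
    + / (12 * INR n ^ 2 * (t + ln (INR n)) ^ 3).
Proof.
  intros Hn. pose proof Hn as [Hx Hl].
  destruct (dom_le t (INR n) (INR n + / 2) Hn ltac:(lra)) as [Hxh Hlh].
  match goal with |- _ <= ?B =>
    replace B with ((f'' t (INR n) - f' t (INR n + / 2)) / 24)
      by (unfold f', f''; field; repeat split; lra) end.
  apply (is_lim_seq_le (fun m => delta_n t n (n + m))
           (fun _ => (f'' t (INR n) - f' t (INR n + / 2)) / 24) (Finite _) (Finite _));
    [| exact (delta_is_lim n Hn) | apply is_lim_seq_const].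
  intros m. apply delta_n_le; [exact Hn | lia].
Qed.

Lemma delta_gt_0 n : dom t (INR n) -> 0 < delta t n.
Proof.
  intros Hn. eapply Rlt_le_trans; [| exact (delta_ge n Hn)].
  destruct (dom_le t (INR n) (INR n + 1) Hn ltac:(lra)). positivity.
Qed.

Lemma delta_scaled_is_lim : is_lim_seq (fun n => delta t n * (24 * INR n * ln (INR n) ^ 2)) 1.
Proof.
  set (r := fun c k => (ln (INR k) / (t + ln (INR k + c))) ^ 2).
  assert (Hr : forall c, 0 <= c <= 1 -> is_lim_seq (r c) 1) by exact (is_lim_seq_ln_div_sqr t).
  assert (Hinv : is_lim_seq (fun k => / INR k) 0)
    by (apply (is_lim_seq_inv _ p_infty); [apply is_lim_seq_INR | discriminate]).
  assert (HinvL : is_lim_seq (fun k => / (t + ln (INR k + 0))) 0)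
    by (apply (is_lim_seq_inv _ p_infty); [apply is_lim_seq_plus_ln | discriminate]).
  apply (is_lim_seq_le_le_loc (fun k => INR k / (INR k + 1) * r 1 k) _
    (fun k => INR k / (INR k + / 2) * r (/ 2) k + / INR k * r 0 k
              + 2 * / INR k * r 0 k * / (t + ln (INR k + 0)))).
  - destruct (eventually_dom t) as [M HM]. exists M. intros n Hn. destruct (HM n Hn) as [_ Hd].
    pose proof (delta_ge n Hd) as Hge. pose proof (delta_le n Hd) as Hle.
    assert (Hw : 0 <= 24 * INR n * ln (INR n) ^ 2)
      by (pose proof (pos_INR n); pose proof (pow2_ge_0 (ln (INR n))); nra).
    destruct (dom_le t (INR n) (INR n + 1) Hd ltac:(lra)) as [_ Hl1].
    destruct (dom_le t (INR n) (INR n + / 2) Hd ltac:(lra)) as [_ Hlh].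
    destruct Hd as [Hx Hl]. unfold r. rewrite !Rplus_0_r.
    split.
    + eapply Rle_trans; [| apply Rmult_le_compat_r; [exact Hw | exact Hge]].
      apply Req_le. field. repeat split; lra.
    + eapply Rle_trans; [apply Rmult_le_compat_r; [exact Hw | exact Hle] |].
      apply Req_le. field. repeat split; lra.
  - replace (Finite 1) with (Finite (1 * 1)) by (f_equal; ring).
    apply is_lim_seq_mult'; [apply is_lim_seq_INR_div; lra | apply Hr; lra].
  - replace (Finite 1) with (Finite (1 * 1 + 0 * 1 + 2 * 0 * 1 * 0)) by (f_equal; ring).
    apply is_lim_seq_plus'; [apply is_lim_seq_plus' |].
    + apply is_lim_seq_mult'; [apply is_lim_seq_INR_div; lra | apply Hr; lra].
    + apply is_lim_seq_mult'; [exact Hinv | apply Hr; lra].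
    + apply is_lim_seq_mult'; [| exact HinvL].
      apply is_lim_seq_mult'; [| apply Hr; lra].
      apply is_lim_seq_mult'; [apply is_lim_seq_const | exact Hinv].
Qed.

Lemma delta_le_inv N : (1 <= N)%nat -> 1 <= t -> delta t N <= / (INR N * t ^ 2).
Proof.
  intros HN Ht. set (x := INR N).
  assert (Hx : 1 <= x) by apply (le_INR 1), HN.
  assert (Hl : 0 <= ln x) by (rewrite <- ln_1; apply ln_le; lra).
  assert (Hlh : 0 <= ln (x + / 2)) by (rewrite <- ln_1; apply ln_le; lra).
  pose proof (delta_le N ltac:(split; fold x; lra)) as Hle. fold x in Hle.
  set (L := t + ln x) in *. set (Lh := t + ln (x + / 2)) in *.
  assert (Hxt : 0 < x * t ^ 2) by positivity.
  assert (A1 : / (24 * (x + / 2) * Lh ^ 2) <= / 24 * / (x * t ^ 2)).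
  { rewrite <- Rinv_mult. apply Rinv_le_contravar; [positivity |].
    rewrite Rmult_assoc. apply Rmult_le_compat_l; [lra |].
    apply Rmult_le_compat; try lra; [apply pow_le; lra | apply pow_incr; unfold Lh; lra]. }
  assert (A2 : / (24 * x ^ 2 * L ^ 2) <= / 24 * / (x * t ^ 2)).
  { rewrite <- Rinv_mult. apply Rinv_le_contravar; [positivity |].
    rewrite Rmult_assoc. apply Rmult_le_compat_l; [lra |].
    apply Rmult_le_compat; [lra | apply pow_le; lra | simpl; nra | apply pow_incr; unfold L; lra]. }
  assert (A3 : / (12 * x ^ 2 * L ^ 3) <= / 12 * / (x * t ^ 2)).
  { rewrite <- Rinv_mult. apply Rinv_le_contravar; [positivity |].
    rewrite Rmult_assoc. apply Rmult_le_compat_l; [lra |].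
    assert (t ^ 2 <= L ^ 2) by (apply pow_incr; unfold L; lra).
    apply Rmult_le_compat; [lra | apply pow_le; lra | simpl; nra |].
    simpl in *. unfold L in *. nra. }
  assert (0 < / (x * t ^ 2)) by (apply Rinv_0_lt_compat, Hxt). lra.
Qed.

End Delta.

Theorem proposition3p6 :
  (forall (N : nat) (t : R), (1 <= N)%nat -> - ln (INR N) < t ->
     (forall n, (N <= n)%nat -> 0 < delta_n t N n) /\
     (forall n, (N <= n)%nat -> delta_n t N n < delta_n t N (S n)) /\
     (exists M, forall n, (N <= n)%nat -> delta_n t N n <= M) /\
     Un_cv (fun m => delta_n t N (N + m)) (delta t N) /\
     0 < delta t N /\
     (forall n, (N <= n)%nat ->
        delta t N - delta_n t N (n - 1) = delta t n /\
        / (24 * (INR n + 1) * (t + ln (INR n + 1)) ^ 2) <= delta t n /\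
        delta t n <=
          / (24 * (INR n + / 2) * (t + ln (INR n + / 2)) ^ 2)
          + / (24 * INR n ^ 2 * (t + ln (INR n)) ^ 2)
          + / (12 * INR n ^ 2 * (t + ln (INR n)) ^ 3)) /\
     Un_cv (fun n => (delta t N - delta_n t N (n - 1))
                     * (24 * INR n * (ln (INR n)) ^ 2)) 1)
  /\
  (exists C T : R, forall (N : nat) (t : R), (1 <= N)%nat -> T <= t ->
     - ln (INR N) < t -> Rabs (delta t N) <= C / (INR N * t ^ 2)).
Proof.
  split.
  - intros N t HN1 Ht.
    assert (HN : dom t (INR N)) by (split; [apply lt_0_INR; lia | lra]).
    split; [| split; [| split; [| split; [| split; [| split]]]]].
    + intros n Hn. exact (delta_n_gt_0 t N n HN Hn).
    + intros n Hn. exact (delta_n_lt_S t N n HN Hn).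
    + exists ((f'' t (INR N) - f' t (INR N + / 2)) / 24).
      intros n Hn. exact (delta_n_le t N n HN Hn).
    + apply is_lim_seq_Reals, delta_is_lim, HN.
    + exact (delta_gt_0 t N HN).
    + intros n Hn. pose proof (dom_INR_le t N n HN Hn) as Hdn.
      split; [| split]; [apply delta_sub_delta_n | apply delta_ge | apply delta_le]; assumption.
    + apply is_lim_seq_Reals.
      apply (is_lim_seq_ext_loc (fun n => delta t n * (24 * INR n * ln (INR n) ^ 2)));
        [| exact (delta_scaled_is_lim t)].
      exists N. intros n Hn. rewrite delta_sub_delta_n by assumption. reflexivity.
  - exists 1, 1. intros N t HN1 Ht HtN.
    assert (HN : dom t (INR N)) by (split; [apply lt_0_INR; lia | lra]).
    rewrite Rabs_pos_eq by exact (Rlt_le _ _ (delta_gt_0 t N HN)).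
    unfold Rdiv. rewrite Rmult_1_l. exact (delta_le_inv t N HN1 Ht).
Qed.
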